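(* Let $X=\{0,1\}$ and $c\geq1$. Let $\widetilde K_{1,00}(c)$ be the set of all $w\in X^c$ such that the sequence $(1,00,w)$ is not a code, and let $J_{1,00}(c)$ be the set of all words $w\in X^c$ of the form $w=1^{i_1}(00)^{j_1}1^{i_2}(00)^{j_2}\cdots1^{i_k}(00)^{j_k}$ for some $k\geq1$ and integers $i_l,j_l\geq0$. Then $\widetilde K_{1,00}(c)=J_{1,00}(c)\cup\{0^c\}$, and $$|\widetilde K_{1,00}(c)|=F_{c+1}+(c)_2,$$ where $F_k$ is the $k$-th Fibonacci number ($F_0=0$, $F_1=1$, $F_{k}=F_{k-1}+F_{k-2}$) and $(c)_2\in\{0,1\}$ is the remainder of $c$ modulo $2$.
   Context: For a letter or word $u$, $u^i$ denotes the concatenation of $i$ copies of $u$ ($u^0$ is the empty word). A code over $X$ is a finite sequence $C=(v_1,\ldots,v_m)$ of words over $X$ such that every $w\in X^*$ has at most one factorization into code-words: if $w=v_{i_1}\cdots v_{i_l}=v_{j_1}\cdots v_{j_{l'}}$ with $l,l'\geq1$, then $l=l'$ and $i_t=j_t$ for all $t$. *)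

From mathcomp Require Import all_boot.
From mathcomp Require Import boolp.
Set Implicit Arguments.
Unset Strict Implicit.
Unset Printing Implicit Defensive.

(* Alphabet X = {0,1} is encoded as bool: false = 0, true = 1.  Words = seq bool. *)

(* A factorization is a
   nonempty sequence of indices (0-based, < m). *)
Definition is_code (C : seq (seq bool)) : Prop :=
  forall s t : seq nat,
    all (fun i => i < size C) s -> all (fun i => i < size C) t ->
    s <> [::] -> t <> [::] ->
    flatten (map (nth [::] C) s) = flatten (map (nth [::] C) t) ->
    s = t.

Definition Ktilde (c : nat) : {set c.-tuple bool} :=
  [set w : c.-tuple bool | `[< ~ is_code [:: [:: true]; [:: false; false]; tval w] >] ].

(* J_{1,00}(c) : words of length c of the form 1^{i_1}(00)^{j_1}...1^{i_k}(00)^{j_k},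
   k >= 1, i_l, j_l >= 0.  The pairs (i_l, j_l) are listed in p. *)
Definition in_J (w : seq bool) : Prop :=
  exists p : seq (nat * nat), 1 <= size p /\
    w = flatten [seq nseq ij.1 true ++ flatten (nseq ij.2 [:: false; false]) | ij <- p].

Definition Jset (c : nat) : {set c.-tuple bool} :=
  [set w : c.-tuple bool | `[< in_J (tval w) >] ].

Fixpoint fib (n : nat) : nat :=
  match n with
  | 0 => 0
  | 1 => 1
  | (m.+1 as k).+1 => fib k + fib m
  end.

From mathcomp Require Import all_boot.
From mathcomp Require Import boolp.

Set Implicit Arguments.
Unset Strict Implicit.
Unset Printing Implicit Defensive.

(* A word is a J-word when it reads as a sequence of blocks 1 and 00; the
   boolean recogniser [isJ] decides this, and agrees with [in_J].
   - If w is a nonempty J-word, w factors both as itself and as a product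
     of 1's and 00's, and (0^c)^2 = (00)^c; so these w give non-codes.
   - Conversely, if w contains a 1 and is not a J-word, (1, 00, w) has
     unique factorization.  We strip leading blocks 1 / 00 off w (stripping
     a prefix that is itself a code-word preserves unique factorization)
     until w starts with 01, where {1, 00, 01v} is a prefix code, or w is
     1 0^k with k odd, whose reversal 0^k 1 = (00)^m 01 is handled the same
     way (a code is uniquely decipherable when its reversal is).
   Finally the J-words of length c are enumerated by the Fibonacci
   recursion (first block 1 or 00), and 0^c is a J-word iff c is even. *)

Definition factor (A : Type) (C : seq (seq A)) (s : seq nat) : seq A :=
  flatten (map (nth [::] C) s).

(* Unique factorization, the empty factorization included; it implies
   [is_code] and, unlike it, is directly amenable to induction. *)
Definition ufact (A : Type) (C : seq (seq A)) : Prop :=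
  forall s t, all (fun i => i < size C) s -> all (fun i => i < size C) t ->
    factor C s = factor C t -> s = t.

Lemma ufact_code (C : seq (seq bool)) : ufact C -> is_code C.
Proof. by move=> uC s t Hs Ht _ _; apply: uC. Qed.

Lemma factor_cons (A : Type) (C : seq (seq A)) i s :
  factor C (i :: s) = nth [::] C i ++ factor C s.
Proof. by []. Qed.

Lemma cat_injl (A : Type) (u : seq A) : injective (cat u).
Proof. by elim: u => //= x u IH a b [] /IH. Qed.

Lemma factor_rev (A : Type) (C : seq (seq A)) s :
  rev (factor C s) = factor (map rev C) (rev s).
Proof.
rewrite /factor rev_flatten -!map_rev -map_comp; congr flatten.
by apply: eq_map => i /=; elim: C i => [|x C IH] [|i] //=.
Qed.

Lemma ufact_rev (A : Type) (C : seq (seq A)) : ufact (map rev C) -> ufact C.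
Proof.
move=> uCr s t Hs Ht E.
have := uCr (rev s) (rev t); rewrite size_map !all_rev -!factor_rev E.
by move=> /(_ Hs Ht erefl) /(congr1 rev); rewrite !revK.
Qed.

(* A factorization over the new code is turned into one over the old code
   by expanding every occurrence of index 2 into [j; 2]. *)
Section Stripping.

Variables (A : Type) (x y v : seq A) (j : nat).
Hypothesis j_lt2 : j < 2.

Definition expand (s : seq nat) : seq nat :=
  flatten (map (fun i => if i == 2 then [:: j; 2] else [:: i]) s).

Let j_neq2 : j != 2. Proof. by case: j j_lt2 => [|[|]]. Qed.

Lemma expand_cons i s :
  expand (i :: s) = (if i == 2 then [:: j; 2] else [:: i]) ++ expand s.
Proof. by []. Qed.

Lemma all_expand s : all (fun i => i < 3) s -> all (fun i => i < 3) (expand s).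
Proof.
elim: s => //= i s IH /andP[i_lt3 Hs]; rewrite expand_cons all_cat IH // andbT.
by case: eqP => _ /=; rewrite ?(ltn_trans j_lt2) ?i_lt3.
Qed.

Lemma factor_expand s : all (fun i => i < 3) s ->
  factor [:: x; y; nth [::] [:: x; y] j ++ v] s = factor [:: x; y; v] (expand s).
Proof.
elim: s => //= i s IH /andP[i_lt3 Hs].
rewrite expand_cons /factor map_cat flatten_cat -/(factor _ s) -/(factor _ (expand s)) -IH //.
case: eqP => [->|ne] /=; first by case: j j_lt2 => [|[|]] //= _; rewrite cats0.
by case: i i_lt3 ne => [|[|[|]]] //= _ _; rewrite cats0.
Qed.

(* An expanded sequence never starts with index 2, since 2 is always
   preceded by j; hence expansion is injective. *)
Lemma expand_neq2 t u : expand t <> 2 :: u.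
Proof.
case: t => [|i t] //; rewrite expand_cons.
by case: eqP => [_ [] /eqP|ne [] /ne]; rewrite ?(negbTE j_neq2).
Qed.

Lemma expand_inj : injective expand.
Proof.
elim=> [|i s IH] [|k t] //=; rewrite ?expand_cons.
- by case: eqP.
- by case: eqP.
case: eqP => [->|ne]; case: eqP => [->|ne'] /=.
- by case=> /IH ->.
- by case=> _ /esym /expand_neq2.
- by case=> _ /expand_neq2.
- by case=> -> /IH ->.
Qed.

Lemma ufact_strip : ufact [:: x; y; v] -> ufact [:: x; y; nth [::] [:: x; y] j ++ v].
Proof.
move=> uC s t Hs Ht E; apply: expand_inj; apply: uC; rewrite ?all_expand //.
by rewrite -!factor_expand.
Qed.

End Stripping.

Definition code100 (w : seq bool) : seq (seq bool) := [:: [:: true]; [:: false; false]; w].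

Lemma ufact_strip1 w : ufact (code100 w) -> ufact (code100 (true :: w)).
Proof. exact: (@ufact_strip _ _ _ _ 0). Qed.

Lemma ufact_strip00 w : ufact (code100 w) -> ufact (code100 (false :: false :: w)).
Proof. exact: (@ufact_strip _ _ _ _ 1). Qed.

(* {1, 00, 01v} is a prefix code: the first letters of a word determine its
   first code-word. *)
Lemma ufact_prefix v : ufact (code100 (false :: true :: v)).
Proof.
elim=> [|i s IH] [|k t] //=; first by case: k => [|[|[|]]].
  by case: i => [|[|[|]]].
move=> /andP[Hi Hs] /andP[Hk Ht]; rewrite !factor_cons.
case: i Hi => [|[|[|]]] // _; case: k Hk => [|[|[|]]] //= _;
  try (by move=> [] /(IH _ Hs Ht) ->); try by [].
by move=> [] /cat_injl /(IH _ Hs Ht) ->.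
Qed.

(* (1, 00, 1 0^k) with k odd: its mirror image (1, 00, (00)^m 01) is
   obtained from a prefix code by stripping. *)
Lemma ufact_one_odd_zeros k : odd k -> ufact (code100 (true :: nseq k false)).
Proof.
move=> k_odd; apply: ufact_rev.
change (ufact (code100 (rev (true :: nseq k false)))); rewrite rev_cons rev_nseq -cats1.
rewrite -(odd_double_half k) k_odd; elim: k./2 => [|m IH]; first exact: ufact_prefix.
by rewrite doubleS; apply: ufact_strip00.
Qed.

Fixpoint isJ (w : seq bool) : bool :=
  match w with
  | [::] => true
  | true :: w' => isJ w'
  | false :: false :: w' => isJ w'
  | _ => false
  end.

Lemma isJ_zeros k : isJ (nseq k false) = ~~ odd k.
Proof. by elim/ltn_ind: k => -[|[|k]] // IH; rewrite /= IH // negbK. Qed.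

Lemma isJ_cat a b : isJ a -> isJ b -> isJ (a ++ b).
Proof.
have [n] := ubnP (size a); elim: n a => // n IH [|[] a] //= a_lt ha hb.
  exact: IH.
by case: a a_lt ha => [|[] a] //= a_lt ha; apply: IH => //; apply: ltnW.
Qed.

Lemma in_J_isJ w : in_J w <-> isJ w.
Proof.
split.
- case=> p [_ ->]; elim: p => //= ij p IH; apply: isJ_cat => //.
  by apply: isJ_cat; [elim: ij.1 | elim: ij.2].
- have [n] := ubnP (size w); elim: n w => // n IH [|[] w] //= w_lt.
  + by exists [:: (0, 0)].
  + by case/(IH _ w_lt) => p [_ ->]; exists ((1, 0) :: p).
  + case: w w_lt => [|[] w] //= w_lt /IH [|p [_ ->]]; first exact: ltnW.
    by exists ((0, 1) :: p).
Qed.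

Lemma zeros_of_no_one (w : seq bool) : true \notin w -> w = nseq (size w) false.
Proof. by elim: w => [|[] w IH] //=; rewrite inE /= => /IH <-. Qed.

Lemma ufact_notJ w : true \in w -> ~~ isJ w -> ufact (code100 w).
Proof.
have [n] := ubnP (size w); elim: n w => // n IH [|[] w] //= w_lt.
- move=> _ notJ; have [one_w|no_one] := boolP (true \in w).
    by apply: ufact_strip1; apply: IH.
  rewrite (zeros_of_no_one no_one) isJ_zeros negbK in notJ *.
  exact: ufact_one_odd_zeros.
- case: w w_lt => [|[] w] //= w_lt; first by move=> _ _; apply: ufact_prefix.
  rewrite !inE /= => one_w notJ; apply: ufact_strip00; apply: IH => //.
  exact: ltnW.
Qed.

Fixpoint parse (w : seq bool) : seq nat :=
  match w with
  | true :: w' => 0 :: parse w'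
  | false :: false :: w' => 1 :: parse w'
  | _ => [::]
  end.

Lemma parseP v w : isJ w ->
  factor (code100 v) (parse w) = w /\ all (fun i => i < 2) (parse w).
Proof.
have [n] := ubnP (size w); elim: n w => // n IH [|[] w] //= w_lt.
  by case/(IH _ w_lt) => parse_w ->; rewrite factor_cons parse_w.
case: w w_lt => [|[] w] //= w_lt /IH [|parse_w ->]; first exact: ltnW.
by rewrite factor_cons parse_w.
Qed.

(* A nonempty J-word w is both a code-word and a product of blocks. *)
Lemma J_not_code w : isJ w -> w != [::] -> ~ is_code (code100 w).
Proof.
move=> Jw w_nz uC; have [parse_w parse_lt2] := parseP w Jw.
have parse_lt3 : all (fun i => i < 3) (parse w) by apply: sub_all parse_lt2 => i /ltnW.
have parse_nz : parse w <> [::] by move=> parse0; rewrite -parse_w parse0 in w_nz.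
have two_nz : [:: 2] <> [::] by [].
have /= := uC (parse w) [:: 2] parse_lt3 erefl parse_nz two_nz.
by rewrite -/(factor _ _) cats0 parse_w => /(_ erefl) parse2; rewrite parse2 in parse_lt2.
Qed.

Lemma factor_zz v k : factor (code100 v) (nseq k 1) = nseq (k + k) false.
Proof. by elim: k => //= k IH; rewrite factor_cons IH addnS. Qed.

(* (0^c)(0^c) = (00)^c. *)
Lemma zeros_not_code c : 0 < c -> ~ is_code (code100 (nseq c false)).
Proof.
case: c => // c _ uC.
have : [:: 2; 2] = nseq c.+1 1.
  apply: uC; rewrite ?all_nseq //.
  by rewrite -!/(factor _ _) factor_zz !factor_cons nseqD cats0.
by case.
Qed.

Lemma not_code100P w : w != [::] ->
  ~ is_code (code100 w) <-> isJ w || (w == nseq (size w) false).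
Proof.
move=> w_nz; split.
- apply: contra_notT; rewrite negb_or => /andP[notJ not_zeros].
  apply/ufact_code/ufact_notJ => //.
  by apply: contraNT not_zeros => /zeros_of_no_one {1}->.
- case/orP => [Jw | /eqP ->]; first exact: J_not_code.
  by apply: zeros_not_code; rewrite lt0n size_eq0.
Qed.

Lemma Jset_isJ c (w : c.-tuple bool) : (w \in Jset c) = isJ w.
Proof. by rewrite inE; apply/asboolP/idP => /in_J_isJ. Qed.

Lemma Ktilde_char c : 1 <= c -> Ktilde c = Jset c :|: [set nseq_tuple c false].
Proof.
move=> c_gt0; apply/setP => w; rewrite in_setU Jset_isJ !inE -val_eqE /=.
have w_nz : tval w != [::] by rewrite -size_eq0 size_tuple -lt0n.
by have := not_code100P w_nz; rewrite size_tuple => -[to_char of_char]; apply/asboolP/idP.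
Qed.

Fixpoint jwords (c : nat) : seq (seq bool) :=
  match c with
  | 0 => [:: [::]]
  | 1 => [:: [:: true]]
  | (m.+1 as k).+1 =>
      map (cons true) (jwords k) ++ map (fun w => false :: false :: w) (jwords m)
  end.

Lemma jwordsSS c : jwords c.+2 =
  map (cons true) (jwords c.+1) ++ map (fun w => false :: false :: w) (jwords c).
Proof. by []. Qed.

(* Prepending a block is injective, so the two halves of [jwords] are
   duplicate-free and disjoint. *)
Lemma cons1_inj : injective (cons true).
Proof. by move=> u v []. Qed.

Lemma cons00_inj : injective (fun w : seq bool => false :: false :: w).
Proof. by move=> u v []. Qed.

Lemma size_jwords c : size (jwords c) = fib c.+1.
Proof. by elim/ltn_ind: c => -[|[|c]] // IH; rewrite jwordsSS size_cat !size_map !IH. Qed.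

Lemma uniq_jwords c : uniq (jwords c).
Proof.
elim/ltn_ind: c => -[|[|c]] // IH.
rewrite jwordsSS cat_uniq (map_inj_uniq cons1_inj) (map_inj_uniq cons00_inj) !IH //.
rewrite andbT; apply/hasPn => _ /mapP[u _ ->].
by apply/mapP => -[].
Qed.

Lemma mem_jwords c w : (w \in jwords c) = isJ w && (size w == c).
Proof.
elim/ltn_ind: c w => -[|[|c]] IH w.
- by rewrite inE; case: w => [|? ?]; rewrite ?andbF.
- by rewrite inE; case: w => [|[] [|? ?]]; rewrite ?andbF.
have IH1 := IH c.+1 (ltnSn _); have {IH} IH0 := IH c (ltnW (ltnSn _)).
rewrite jwordsSS mem_cat; set L1 := jwords c.+1; set L0 := jwords c.
case: w => [|[] w] /=.
- by apply/negbTE/negP => /orP[] /mapP[].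
- rewrite (mem_map cons1_inj) IH1 eqSS.
  by case: (boolP (_ \in map _ L0)) => [/mapP[]|_] //; rewrite orbF.
- case: w => [|[] w] /=; try by apply/negbTE/negP => /orP[] /mapP[].
  rewrite (mem_map cons00_inj) IH0 !eqSS.
  by case: (boolP (_ \in map _ L1)) => [/mapP[]|_].
Qed.

Lemma card_tuples_in (T : finType) c (s : seq (seq T)) :
  uniq s -> all (fun x => size x == c) s ->
  #|[set w : c.-tuple T | tval w \in s]| = size s.
Proof.
move=> s_uniq s_size.
have -> : #|[set w : c.-tuple T | tval w \in s]| = #|pmap (insub : _ -> option (c.-tuple T)) s|.
  by apply: eq_card => w; rewrite inE mem_pmap_sub.
rewrite (card_uniqP _) ?pmap_sub_uniq // size_pmap_sub.
by rewrite (eq_in_count (a2 := predT)) ?count_predT // => x /(allP s_size).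
Qed.

Lemma card_Jset c : #|Jset c| = fib c.+1.
Proof.
rewrite -size_jwords -(@card_tuples_in _ c _ (uniq_jwords c)); last first.
  by apply/allP => w; rewrite mem_jwords => /andP[].
by apply: eq_card => w; rewrite Jset_isJ inE mem_jwords size_tuple eqxx andbT.
Qed.

Theorem proposition3 (c : nat) : 1 <= c ->
  Ktilde c = Jset c :|: [set nseq_tuple c false] /\
  #|Ktilde c| = fib c.+1 + c %% 2.
Proof.
move=> c_gt0; have K_eq := Ktilde_char c_gt0; split => //.
rewrite K_eq setUC cardsU1 card_Jset Jset_isJ /= isJ_zeros negbK modn2 addnC.
by case: (odd c).
Qed.
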